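(* Let $\mathcal{K}$ be a $2$-category with pseudolimits of arrows, and $U\colon\mathcal{L}\to\mathcal{K}$ a $2$-functor which (1) has the equivalence lifting property: if $A\in\mathcal{L}$ and $u\colon L\to UA$ is an equivalence in $\mathcal{K}$, then there is an equivalence $\overline{u}\colon\overline{L}\to A$ in $\mathcal{L}$ with $U\overline{u}=u$; and (2) acts as a discrete isofibration of categories $\mathcal{L}(A,B)\to\mathcal{K}(UA,UB)$ on hom-categories. Then $\mathcal{L}$ has pseudolimits of arrows and $U$ preserves them. Consequently, if $\mathcal{K}$ satisfies the normal isofibration property, then so does $\mathcal{L}$.
   Context: An equivalence is a morphism $f\colon A\to B$ with $g\colon B\to A$ and invertible $2$-cells $1\cong gf$, $fg\cong 1$. A functor is a discrete isofibration of categories if every isomorphism with codomain in the image has a unique lift with the given codomain. The pseudolimit of an arrow $f\colon A\to B$ is an object $L_f$ with $u_f\colon L_f\to A$, $v_f\colon L_f\to B$ and invertible $\lambda_f\colon v_f\cong fu_f$, universal among such data (in both the $1$- and $2$-dimensional sense). A $2$-category has the normal isofibration property if every representable isofibration in it is a normal isofibration. A morphism $f\colon A\to B$ is a representable isofibration if for every object $X$, given $g\colon X\to A$, $h\colon X\to B$ and invertible $\alpha\colon fg\cong h$, there exist $h'\colon X\to A$ and invertible $\alpha'\colon g\cong h'$ with $f\alpha'=\alpha$. A cleavage is a choice of such $(\alpha',h')$ for every $(g,\alpha,h)$, natural in $X$; it is normal if $\alpha'$ is an identity whenever $\alpha$ is. A normal isofibration is a representable isofibration admitting a normal cleavage. 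*)

Set Implicit Arguments.
Unset Strict Implicit.

(* A (strict) 2-category, presented "fibred": for objects A B, [Hom A B] is
   the type of 1-cells and [Cell A B] the type of all 2-cells between
   1-cells A -> B, each 2-cell having a source [src2] and target [tgt2].
   Vertical composition [vcomp b a] (= b . a, first a then b) is a total
   operation, only constrained when [tgt2 a = src2 b]; horizontal
   composition [hcomp b a] (b after a) is always defined. *)
Record TwoCat := {
  Ob : Type;
  Hom : Ob -> Ob -> Type;
  Cell : Ob -> Ob -> Type;
  id1 : forall A, Hom A A;
  comp1 : forall A B C, Hom B C -> Hom A B -> Hom A C;
  src2 : forall A B, Cell A B -> Hom A B;
  tgt2 : forall A B, Cell A B -> Hom A B;
  id2 : forall A B, Hom A B -> Cell A B;
  vcomp : forall A B, Cell A B -> Cell A B -> Cell A B;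
  hcomp : forall A B C, Cell B C -> Cell A B -> Cell A C;
  comp1_assoc : forall A B C D (h : Hom C D) (g : Hom B C) (f : Hom A B),
      comp1 h (comp1 g f) = comp1 (comp1 h g) f;
  comp1_id_l : forall A B (f : Hom A B), comp1 (id1 B) f = f;
  comp1_id_r : forall A B (f : Hom A B), comp1 f (id1 A) = f;
  src_id2 : forall A B (f : Hom A B), src2 (id2 f) = f;
  tgt_id2 : forall A B (f : Hom A B), tgt2 (id2 f) = f;
  src_vcomp : forall A B (b a : Cell A B),
      tgt2 a = src2 b -> src2 (vcomp b a) = src2 a;
  tgt_vcomp : forall A B (b a : Cell A B),
      tgt2 a = src2 b -> tgt2 (vcomp b a) = tgt2 b;
  vcomp_assoc : forall A B (c b a : Cell A B),
      tgt2 a = src2 b -> tgt2 b = src2 c ->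
      vcomp c (vcomp b a) = vcomp (vcomp c b) a;
  vcomp_id_l : forall A B (a : Cell A B), vcomp (id2 (tgt2 a)) a = a;
  vcomp_id_r : forall A B (a : Cell A B), vcomp a (id2 (src2 a)) = a;
  src_hcomp : forall A B C (b : Cell B C) (a : Cell A B),
      src2 (hcomp b a) = comp1 (src2 b) (src2 a);
  tgt_hcomp : forall A B C (b : Cell B C) (a : Cell A B),
      tgt2 (hcomp b a) = comp1 (tgt2 b) (tgt2 a);
  hcomp_assoc : forall A B C D (c : Cell C D) (b : Cell B C) (a : Cell A B),
      hcomp c (hcomp b a) = hcomp (hcomp c b) a;
  hcomp_id_l : forall A B (a : Cell A B), hcomp (id2 (id1 B)) a = a;
  hcomp_id_r : forall A B (a : Cell A B), hcomp a (id2 (id1 A)) = a;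
  hcomp_id2 : forall A B C (g : Hom B C) (f : Hom A B),
      hcomp (id2 g) (id2 f) = id2 (comp1 g f);
  interchange : forall A B C (b b' : Cell B C) (a a' : Cell A B),
      tgt2 a = src2 a' -> tgt2 b = src2 b' ->
      hcomp (vcomp b' b) (vcomp a' a) = vcomp (hcomp b' a') (hcomp b a)
}.

Arguments Hom : clear implicits.
Arguments Cell : clear implicits.
Arguments id1 {t} A.
Arguments comp1 {t A B C} _ _.
Arguments src2 {t A B} _.
Arguments tgt2 {t A B} _.
Arguments id2 {t A B} _.
Arguments vcomp {t A B} _ _.
Arguments hcomp {t A B C} _ _.

Section Notions.
Variable K : TwoCat.

Definition whiskL {A B C : Ob K} (h : Hom K B C) (a : Cell K A B) : Cell K A C :=
  hcomp (id2 h) a.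
Definition whiskR {A B C : Ob K} (a : Cell K B C) (h : Hom K A B) : Cell K A C :=
  hcomp a (id2 h).

Definition invertible {A B : Ob K} (a : Cell K A B) : Prop :=
  exists b : Cell K A B,
    src2 b = tgt2 a /\ tgt2 b = src2 a /\
    vcomp b a = id2 (src2 a) /\ vcomp a b = id2 (tgt2 a).

Definition equivalence {A B : Ob K} (f : Hom K A B) : Prop :=
  exists (g : Hom K B A) (eta : Cell K A A) (eps : Cell K B B),
    src2 eta = id1 A /\ tgt2 eta = comp1 g f /\ invertible eta /\
    src2 eps = comp1 f g /\ tgt2 eps = id1 B /\ invertible eps.

Definition is_arrow_pseudolimit {A B : Ob K} (f : Hom K A B)
    (L : Ob K) (u : Hom K L A) (v : Hom K L B) (lam : Cell K L B) : Prop :=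
  (src2 lam = v /\ tgt2 lam = comp1 f u /\ invertible lam) /\
  (forall (X : Ob K) (p : Hom K X A) (q : Hom K X B) (th : Cell K X B),
      src2 th = q -> tgt2 th = comp1 f p -> invertible th ->
      exists h : Hom K X L,
        (comp1 u h = p /\ comp1 v h = q /\ whiskR lam h = th) /\
        forall h' : Hom K X L,
          comp1 u h' = p -> comp1 v h' = q -> whiskR lam h' = th -> h' = h) /\
  (forall (X : Ob K) (h k : Hom K X L) (al : Cell K X A) (be : Cell K X B),
      src2 al = comp1 u h -> tgt2 al = comp1 u k ->
      src2 be = comp1 v h -> tgt2 be = comp1 v k ->
      vcomp (whiskL f al) (whiskR lam h) = vcomp (whiskR lam k) be ->
      exists ga : Cell K X L,
        (src2 ga = h /\ tgt2 ga = k /\ whiskL u ga = al /\ whiskL v ga = be) /\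
        forall ga' : Cell K X L,
          src2 ga' = h -> tgt2 ga' = k -> whiskL u ga' = al ->
          whiskL v ga' = be -> ga' = ga).

Definition has_arrow_pseudolimits : Prop :=
  forall (A B : Ob K) (f : Hom K A B),
    exists (L : Ob K) (u : Hom K L A) (v : Hom K L B) (lam : Cell K L B),
      is_arrow_pseudolimit f u v lam.

Definition rep_isofibration {A B : Ob K} (f : Hom K A B) : Prop :=
  forall (X : Ob K) (g : Hom K X A) (h : Hom K X B) (al : Cell K X B),
    src2 al = comp1 f g -> tgt2 al = h -> invertible al ->
    exists (h' : Hom K X A) (al' : Cell K X A),
      src2 al' = g /\ tgt2 al' = h' /\ invertible al' /\ whiskL f al' = al.

(* A cleavage for f: for each X, g : X -> A and invertible al : f g => h
   (h is determined as tgt2 al) a choice (h', al'), natural in X. *)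
Definition is_cleavage {A B : Ob K} (f : Hom K A B)
    (cl : forall X : Ob K, Hom K X A -> Cell K X B -> Hom K X A * Cell K X A)
    : Prop :=
  (forall (X : Ob K) (g : Hom K X A) (al : Cell K X B),
      src2 al = comp1 f g -> invertible al ->
      src2 (snd (cl X g al)) = g /\ tgt2 (snd (cl X g al)) = fst (cl X g al) /\
      invertible (snd (cl X g al)) /\ whiskL f (snd (cl X g al)) = al) /\
  (forall (Y X : Ob K) (k : Hom K Y X) (g : Hom K X A) (al : Cell K X B),
      src2 al = comp1 f g -> invertible al ->
      cl Y (comp1 g k) (whiskR al k) =
        (comp1 (fst (cl X g al)) k, whiskR (snd (cl X g al)) k)).

Definition is_normal_cleavage {A B : Ob K} (f : Hom K A B)
    (cl : forall X : Ob K, Hom K X A -> Cell K X B -> Hom K X A * Cell K X A)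
    : Prop :=
  is_cleavage f cl /\
  forall (X : Ob K) (g : Hom K X A),
    snd (cl X g (id2 (comp1 f g))) = id2 g.

Definition normal_isofibration {A B : Ob K} (f : Hom K A B) : Prop :=
  rep_isofibration f /\ exists cl, is_normal_cleavage f cl.

Definition normal_isofibration_property : Prop :=
  forall (A B : Ob K) (f : Hom K A B), rep_isofibration f -> normal_isofibration f.

End Notions.

Record TwoFunctor (L K : TwoCat) := {
  F0 : Ob L -> Ob K;
  F1 : forall A B, Hom L A B -> Hom K (F0 A) (F0 B);
  F2 : forall A B, Cell L A B -> Cell K (F0 A) (F0 B);
  F1_id : forall A, F1 (id1 A) = id1 (F0 A);
  F1_comp : forall A B C (g : Hom L B C) (f : Hom L A B),
      F1 (comp1 g f) = comp1 (F1 g) (F1 f);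
  F2_src : forall A B (a : Cell L A B), src2 (F2 a) = F1 (src2 a);
  F2_tgt : forall A B (a : Cell L A B), tgt2 (F2 a) = F1 (tgt2 a);
  F2_id : forall A B (f : Hom L A B), F2 (id2 f) = id2 (F1 f);
  F2_vcomp : forall A B (b a : Cell L A B),
      tgt2 a = src2 b -> F2 (vcomp b a) = vcomp (F2 b) (F2 a);
  F2_hcomp : forall A B C (b : Cell L B C) (a : Cell L A B),
      F2 (hcomp b a) = hcomp (F2 b) (F2 a)
}.

Arguments F0 {L K} _ _.
Arguments F1 {L K} _ {A B} _.
Arguments F2 {L K} _ {A B} _.

Section FunctorNotions.
Variables (L K : TwoCat) (U : TwoFunctor L K).

Definition equivalence_lifting : Prop :=
  forall (A : Ob L) (X : Ob K) (u : Hom K X (F0 U A)),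
    equivalence u ->
    exists (Xb : Ob L) (ub : Hom L Xb A),
      equivalence ub /\
      existT (fun Y => Hom K Y (F0 U A)) (F0 U Xb) (F1 U ub) =
      existT (fun Y => Hom K Y (F0 U A)) X u.

Definition hom_discrete_isofibration : Prop :=
  forall (A B : Ob L) (g : Hom L A B) (th : Cell K (F0 U A) (F0 U B)),
    tgt2 th = F1 U g -> invertible th ->
    exists al : Cell L A B,
      (tgt2 al = g /\ invertible al /\ F2 U al = th) /\
      forall al' : Cell L A B,
        tgt2 al' = g -> invertible al' -> F2 U al' = th -> al' = al.

Definition preserves_arrow_pseudolimits : Prop :=
  forall (A B : Ob L) (f : Hom L A B) (X : Ob L) (u : Hom L X A)
         (v : Hom L X B) (lam : Cell L X B),
    is_arrow_pseudolimit f u v lam ->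
    is_arrow_pseudolimit (F1 U f) (F1 U u) (F1 U v) (F2 U lam).

End FunctorNotions.

From Stdlib Require Import ClassicalEpsilon Eqdep.

Set Implicit Arguments.
Unset Strict Implicit.

(* The pseudolimit of [U f] in [K] lifts to [L]: its projection [u] is an
   equivalence, which lifts to an equivalence [ub] by (1), and the invertible
   cone 2-cell lifts by (2). The lifted cone is a pseudolimit in [L].
   Two-dimensionally, because [ub] is an equivalence, hence locally fully
   faithful, and the cone 2-cell is invertible. One-dimensionally, because a
   factorisation [k] in [K] lifts to a 1-cell of [L]: lift an invertible
   2-cell from [k] to the image of a 1-cell of [L]; uniqueness comes from the
   fact that an invertible 2-cell lying over an identity is an identity.
   Preservation follows since pseudolimits are unique up to isomorphism.
   Finally, if [f] is a representable isofibration in [L] then so is [U f]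
   (lift the generic isomorphism of the pseudolimit and pull back along
   factorisations), and a normal cleavage of [U f] lifts along (2) to one of
   [f], uniqueness of lifts giving naturality and normality. *)

Section Whiskering.
Context {C : TwoCat}.

Lemma src_whiskL A B D (h : Hom C B D) (a : Cell C A B) :
  src2 (whiskL h a) = comp1 h (src2 a).
Proof. unfold whiskL. rewrite src_hcomp, src_id2. reflexivity. Qed.

Lemma tgt_whiskL A B D (h : Hom C B D) (a : Cell C A B) :
  tgt2 (whiskL h a) = comp1 h (tgt2 a).
Proof. unfold whiskL. rewrite tgt_hcomp, tgt_id2. reflexivity. Qed.

Lemma src_whiskR A B D (a : Cell C B D) (h : Hom C A B) :
  src2 (whiskR a h) = comp1 (src2 a) h.
Proof. unfold whiskR. rewrite src_hcomp, src_id2. reflexivity. Qed.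

Lemma tgt_whiskR A B D (a : Cell C B D) (h : Hom C A B) :
  tgt2 (whiskR a h) = comp1 (tgt2 a) h.
Proof. unfold whiskR. rewrite tgt_hcomp, tgt_id2. reflexivity. Qed.

Lemma vcomp_idl A B (f : Hom C A B) (a : Cell C A B) : tgt2 a = f -> vcomp (id2 f) a = a.
Proof. intros <-. apply vcomp_id_l. Qed.

Lemma vcomp_idr A B (f : Hom C A B) (a : Cell C A B) : src2 a = f -> vcomp a (id2 f) = a.
Proof. intros <-. apply vcomp_id_r. Qed.

Lemma whiskL_vcomp A B D (h : Hom C B D) (b a : Cell C A B) :
  tgt2 a = src2 b -> whiskL h (vcomp b a) = vcomp (whiskL h b) (whiskL h a).
Proof.
  intros E. unfold whiskL. rewrite <- interchange by (rewrite ?tgt_id2, ?src_id2; auto).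
  rewrite vcomp_idl by apply tgt_id2. reflexivity.
Qed.

Lemma whiskR_vcomp A B D (b a : Cell C B D) (h : Hom C A B) :
  tgt2 a = src2 b -> whiskR (vcomp b a) h = vcomp (whiskR b h) (whiskR a h).
Proof.
  intros E. unfold whiskR. rewrite <- interchange by (rewrite ?tgt_id2, ?src_id2; auto).
  rewrite vcomp_idl by apply tgt_id2. reflexivity.
Qed.

Lemma whiskL_id2 A B D (h : Hom C B D) (f : Hom C A B) : whiskL h (id2 f) = id2 (comp1 h f).
Proof. apply hcomp_id2. Qed.

Lemma whiskR_id2 A B D (f : Hom C B D) (h : Hom C A B) : whiskR (id2 f) h = id2 (comp1 f h).
Proof. apply hcomp_id2. Qed.

Lemma whiskL_comp1 A B D E (g : Hom C D E) (h : Hom C B D) (a : Cell C A B) :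
  whiskL g (whiskL h a) = whiskL (comp1 g h) a.
Proof. unfold whiskL. rewrite hcomp_assoc, hcomp_id2. reflexivity. Qed.

Lemma whiskR_comp1 A B D E (a : Cell C D E) (h : Hom C B D) (k : Hom C A B) :
  whiskR (whiskR a h) k = whiskR a (comp1 h k).
Proof. unfold whiskR. rewrite <- hcomp_assoc, hcomp_id2. reflexivity. Qed.

Lemma whiskR_whiskL A B D E (h : Hom C D E) (a : Cell C B D) (k : Hom C A B) :
  whiskR (whiskL h a) k = whiskL h (whiskR a k).
Proof. unfold whiskR, whiskL. rewrite hcomp_assoc. reflexivity. Qed.

Lemma whiskL_id1 A B (a : Cell C A B) : whiskL (id1 B) a = a.
Proof. apply hcomp_id_l. Qed.

Lemma whiskR_id1 A B (a : Cell C A B) : whiskR a (id1 A) = a.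
Proof. apply hcomp_id_r. Qed.

Lemma whisker_exchange A B D (b : Cell C B D) (a : Cell C A B) :
  vcomp (whiskL (tgt2 b) a) (whiskR b (src2 a)) =
  vcomp (whiskR b (tgt2 a)) (whiskL (src2 b) a).
Proof.
  unfold whiskL, whiskR.
  rewrite <- !interchange by (rewrite ?src_id2, ?tgt_id2; reflexivity).
  rewrite !vcomp_id_l, !vcomp_id_r. reflexivity.
Qed.

End Whiskering.

Section Inverses.
Context {C : TwoCat}.

(* An arbitrary cell unless [a] is invertible. *)
Definition inv {A B} (a : Cell C A B) : Cell C A B :=
  epsilon (inhabits a) (fun b => src2 b = tgt2 a /\ tgt2 b = src2 a /\
    vcomp b a = id2 (src2 a) /\ vcomp a b = id2 (tgt2 a)).

Lemma inv_spec A B (a : Cell C A B) : invertible a ->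
  src2 (inv a) = tgt2 a /\ tgt2 (inv a) = src2 a /\
  vcomp (inv a) a = id2 (src2 a) /\ vcomp a (inv a) = id2 (tgt2 a).
Proof. intros H. unfold inv. apply epsilon_spec. exact H. Qed.

Lemma src_inv A B (a : Cell C A B) : invertible a -> src2 (inv a) = tgt2 a.
Proof. intros H; apply (inv_spec H). Qed.

Lemma tgt_inv A B (a : Cell C A B) : invertible a -> tgt2 (inv a) = src2 a.
Proof. intros H; apply (inv_spec H). Qed.

Lemma vcomp_invl A B (a : Cell C A B) : invertible a -> vcomp (inv a) a = id2 (src2 a).
Proof. intros H; apply (inv_spec H). Qed.

Lemma vcomp_invr A B (a : Cell C A B) : invertible a -> vcomp a (inv a) = id2 (tgt2 a).
Proof. intros H; apply (inv_spec H). Qed.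

Lemma invertible_inv A B (a : Cell C A B) : invertible a -> invertible (inv a).
Proof.
  intros H. destruct (inv_spec H) as (E1 & E2 & E3 & E4).
  exists a. rewrite E1, E2. auto.
Qed.

Lemma inv_unique A B (a b : Cell C A B) : invertible a ->
  src2 b = tgt2 a -> tgt2 b = src2 a -> vcomp b a = id2 (src2 a) -> b = inv a.
Proof.
  intros H E1 E2 E3. destruct (inv_spec H) as (F1 & F2 & F3 & F4).
  transitivity (vcomp b (vcomp a (inv a))).
  - rewrite F4, vcomp_idr; auto.
  - rewrite vcomp_assoc, E3, vcomp_idl; congruence.
Qed.

Lemma invK A B (a : Cell C A B) : invertible a -> inv (inv a) = a.
Proof.
  intros H. destruct (inv_spec H) as (F1 & F2 & F3 & F4).
  symmetry. apply inv_unique; try apply invertible_inv; auto.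
  rewrite F4, F1. reflexivity.
Qed.

Lemma invertible_id2 A B (f : Hom C A B) : invertible (id2 f).
Proof. exists (id2 f). rewrite !src_id2, !tgt_id2, vcomp_idl by apply tgt_id2. auto. Qed.

Lemma inv_id2 A B (f : Hom C A B) : inv (id2 f) = id2 f.
Proof.
  symmetry. apply inv_unique; rewrite ?src_id2, ?tgt_id2; auto using invertible_id2.
  apply vcomp_idl, tgt_id2.
Qed.

Lemma invertible_vcomp A B (b a : Cell C A B) : tgt2 a = src2 b ->
  invertible a -> invertible b -> invertible (vcomp b a).
Proof.
  intros E Ha Hb.
  destruct (inv_spec Ha) as (A1 & A2 & A3 & A4).
  destruct (inv_spec Hb) as (B1 & B2 & B3 & B4).
  exists (vcomp (inv a) (inv b)).
  rewrite !src_vcomp, !tgt_vcomp by congruence.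
  split; [auto | split; [auto | split]].
  - rewrite <- (vcomp_assoc (c := inv a)) by (rewrite ?tgt_vcomp; congruence).
    rewrite (vcomp_assoc (c := inv b)), B3, vcomp_idl by congruence. exact A3.
  - rewrite <- (vcomp_assoc (c := b)) by (rewrite ?tgt_vcomp; congruence).
    rewrite (vcomp_assoc (c := a)), A4, vcomp_idl by congruence. exact B4.
Qed.

Lemma invertible_whiskL A B D (h : Hom C B D) (a : Cell C A B) :
  invertible a -> invertible (whiskL h a).
Proof.
  intros H. destruct (inv_spec H) as (A1 & A2 & A3 & A4). exists (whiskL h (inv a)).
  rewrite !src_whiskL, !tgt_whiskL, <- !whiskL_vcomp, A1, A2, A3, A4, !whiskL_id2; auto.
Qed.

Lemma invertible_whiskR A B D (a : Cell C B D) (h : Hom C A B) :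
  invertible a -> invertible (whiskR a h).
Proof.
  intros H. destruct (inv_spec H) as (A1 & A2 & A3 & A4). exists (whiskR (inv a) h).
  rewrite !src_whiskR, !tgt_whiskR, <- !whiskR_vcomp, A1, A2, A3, A4, !whiskR_id2; auto.
Qed.

Lemma inv_whiskL A B D (h : Hom C B D) (a : Cell C A B) :
  invertible a -> inv (whiskL h a) = whiskL h (inv a).
Proof.
  intros H. destruct (inv_spec H) as (A1 & A2 & A3 & A4).
  symmetry. apply inv_unique; auto using invertible_whiskL.
  all: rewrite ?src_whiskL, ?tgt_whiskL, <- ?whiskL_vcomp, ?A1, ?A2, ?A3, ?whiskL_id2; auto.
Qed.

Lemma inv_whiskR A B D (a : Cell C B D) (h : Hom C A B) :
  invertible a -> inv (whiskR a h) = whiskR (inv a) h.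
Proof.
  intros H. destruct (inv_spec H) as (A1 & A2 & A3 & A4).
  symmetry. apply inv_unique; auto using invertible_whiskR.
  all: rewrite ?src_whiskR, ?tgt_whiskR, <- ?whiskR_vcomp, ?A1, ?A2, ?A3, ?whiskR_id2; auto.
Qed.

End Inverses.

Lemma comp1_assoc_rewrite {C : TwoCat} A B D (x : Hom C B D) (y : Hom C A B) z :
  comp1 x y = z -> forall E (w : Hom C E A), comp1 x (comp1 y w) = comp1 z w.
Proof. intros <- E w. apply comp1_assoc. Qed.

(* [boundary] closes equations between sources and targets of composite cells:
   it normalises 1-cell composites (right-associated, units removed) and
   rewrites with the boundary hypotheses in context. *)
Ltac rewrite_boundary_hyps := repeat match goal with
  | H : src2 _ = ?r |- _ =>
      lazymatch r with src2 _ => fail | tgt2 _ => fail | _ => progress rewrite !H end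
  | H : tgt2 _ = ?r |- _ =>
      lazymatch r with src2 _ => fail | tgt2 _ => fail | _ => progress rewrite !H end
  | H : comp1 _ _ = _ |- _ => progress rewrite ?H, ?(comp1_assoc_rewrite H)
  end.

Ltac boundary_step :=
  rewrite ?src_id2, ?tgt_id2, ?src_hcomp, ?tgt_hcomp, ?src_whiskL, ?tgt_whiskL,
    ?src_whiskR, ?tgt_whiskR, ?F2_src, ?F2_tgt, ?F1_comp, ?F1_id,
    ?comp1_id_l, ?comp1_id_r, <- ?comp1_assoc.

Ltac boundary :=
  solve [intros;
    try rewrite ?comp1_id_l, ?comp1_id_r, <- ?comp1_assoc, ?F1_comp, ?F1_id in *;
    repeat progress (boundary_step; rewrite_boundary_hyps;
      try (rewrite src_vcomp by boundary); try (rewrite tgt_vcomp by boundary);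
      try (rewrite src_inv by invertibility); try (rewrite tgt_inv by invertibility));
    first [reflexivity | congruence]]
with invertibility :=
  solve [repeat first [assumption | apply invertible_inv | apply invertible_id2
    | apply invertible_whiskL | apply invertible_whiskR
    | apply invertible_vcomp; [boundary | ..]]].

Section Cancellation.
Context {C : TwoCat}.

Lemma vcomp_invlK A B (a x : Cell C A B) : invertible a -> tgt2 x = src2 a ->
  vcomp (inv a) (vcomp a x) = x.
Proof.
  intros H E. rewrite vcomp_assoc by boundary. rewrite vcomp_invl by invertibility.
  apply vcomp_idl; boundary.
Qed.

Lemma vcomp_invrK A B (a x : Cell C A B) : invertible a -> tgt2 x = tgt2 a ->
  vcomp a (vcomp (inv a) x) = x.
Proof.
  intros H E. rewrite vcomp_assoc by boundary. rewrite vcomp_invr by invertibility.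
  apply vcomp_idl; boundary.
Qed.

Lemma vcomp_cancel_l A B (a x y : Cell C A B) : invertible a ->
  tgt2 x = src2 a -> tgt2 y = src2 a -> vcomp a x = vcomp a y -> x = y.
Proof.
  intros H E1 E2 E.
  rewrite <- (vcomp_invlK H E1), <- (vcomp_invlK H E2), E. reflexivity.
Qed.

Lemma vcomp_cancel_r A B (a x y : Cell C A B) : invertible a ->
  src2 x = tgt2 a -> src2 y = tgt2 a -> vcomp x a = vcomp y a -> x = y.
Proof.
  intros H E1 E2 E.
  rewrite <- (vcomp_idr (f := tgt2 a) (a := x)), <- (vcomp_idr (f := tgt2 a) (a := y)) by auto.
  rewrite <- (vcomp_invr H), !vcomp_assoc, E by boundary. reflexivity.
Qed.

Lemma vcomp_square_inv A B (a c x y : Cell C A B) :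
  invertible a -> invertible c ->
  tgt2 x = src2 c -> src2 y = tgt2 a -> src2 x = src2 a -> tgt2 y = tgt2 c ->
  vcomp c x = vcomp y a -> vcomp x (inv a) = vcomp (inv c) y.
Proof.
  intros Ha Hc Tx Sy Sx Ty E.
  rewrite <- (vcomp_invlK Hc Tx), <- vcomp_assoc, E, <- vcomp_assoc by boundary.
  rewrite vcomp_invr, vcomp_idr by (auto || boundary). reflexivity.
Qed.

End Cancellation.

Section FunctorImage.
Context {L K : TwoCat} (U : TwoFunctor L K).

Lemma F2_whiskL A B D (h : Hom L B D) (a : Cell L A B) :
  F2 U (whiskL h a) = whiskL (F1 U h) (F2 U a).
Proof. unfold whiskL. rewrite F2_hcomp, F2_id. reflexivity. Qed.

Lemma F2_whiskR A B D (a : Cell L B D) (h : Hom L A B) :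
  F2 U (whiskR a h) = whiskR (F2 U a) (F1 U h).
Proof. unfold whiskR. rewrite F2_hcomp, F2_id. reflexivity. Qed.

Lemma F2_invertible A B (a : Cell L A B) : invertible a -> invertible (F2 U a).
Proof.
  intros (b & E1 & E2 & E3 & E4). exists (F2 U b).
  rewrite <- !F2_vcomp by congruence.
  rewrite E3, E4, !F2_id, !F2_src, !F2_tgt, E1, E2. auto.
Qed.

Lemma F2_inv A B (a : Cell L A B) : invertible a -> F2 U (inv a) = inv (F2 U a).
Proof.
  intros H. apply inv_unique; try boundary; auto using F2_invertible.
  rewrite <- F2_vcomp by boundary. rewrite vcomp_invl, F2_id, F2_src by auto. reflexivity.
Qed.

Lemma F1_equivalence A B (f : Hom L A B) : equivalence f -> equivalence (F1 U f).
Proof.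
  intros (g & eta & eps & Se & Te & Ie & Sp & Tp & Ip).
  exists (F1 U g), (F2 U eta), (F2 U eps).
  repeat split; auto using F2_invertible; boundary.
Qed.

End FunctorImage.

Section Equivalences.
Context {C : TwoCat}.

Lemma unit_faithful B (m : Hom C B B) (e : Cell C B B) X (a b : Cell C X B) :
  src2 e = id1 B -> tgt2 e = m -> invertible e ->
  src2 a = src2 b -> tgt2 a = tgt2 b -> whiskL m a = whiskL m b -> a = b.
Proof.
  intros Se Te Ie Sab Tab Eab.
  assert (Nat : forall c : Cell C X B,
    vcomp (whiskL m c) (whiskR e (src2 c)) = vcomp (whiskR e (tgt2 c)) c).
  { intros c. rewrite <- Te, whisker_exchange, Se, whiskL_id1. reflexivity. }
  apply (vcomp_cancel_l (a := whiskR e (tgt2 a))); [invertibility | boundary | boundary |].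
  rewrite <- Nat, Tab, <- Nat, Eab, Sab. reflexivity.
Qed.

Section Equivalence.
Variables (A B : Ob C) (f : Hom C A B).
Hypothesis Hf : equivalence f.

Lemma equivalence_faithful X (a b : Cell C X A) :
  src2 a = src2 b -> tgt2 a = tgt2 b -> whiskL f a = whiskL f b -> a = b.
Proof.
  destruct Hf as (g & eta & eps & Se & Te & Ie & _). intros Sab Tab Eab.
  apply (unit_faithful Se Te Ie Sab Tab). rewrite <- !whiskL_comp1, Eab. reflexivity.
Qed.

Lemma equivalence_full X (x y : Hom C X A) (al : Cell C X B) :
  src2 al = comp1 f x -> tgt2 al = comp1 f y ->
  exists ga, src2 ga = x /\ tgt2 ga = y /\ whiskL f ga = al /\
    (invertible al -> invertible ga).
Proof.
  destruct Hf as (g & eta & eps & Se & Te & Ie & Sp & Tp & Ip). intros Sa Ta.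
  set (ga := vcomp (whiskR (inv eta) y) (vcomp (whiskL g al) (whiskR eta x))).
  assert (Sg : src2 ga = x) by (unfold ga; boundary).
  assert (Tg : tgt2 ga = y) by (unfold ga; boundary).
  exists ga. split; [exact Sg | split; [exact Tg | split]].
  - assert (Hg : whiskL (comp1 g f) ga = whiskL g al).
    { apply (vcomp_cancel_r (a := whiskR eta x)); try boundary; try invertibility.
      rewrite <- Te, <- Sg at 1. rewrite whisker_exchange, Se, whiskL_id1, Tg.
      unfold ga. rewrite <- inv_whiskR by auto.
      rewrite vcomp_invrK; try boundary; invertibility. }
    apply (unit_faithful (m := comp1 f g) (e := inv eps)); try boundary; try invertibility.
    rewrite <- !whiskL_comp1, (whiskL_comp1 g f ga), Hg. reflexivity.
  - intros Ia. unfold ga. invertibility.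
Qed.

End Equivalence.
End Equivalences.

Section ArrowPseudolimits.
Context {C : TwoCat}.
Variables (A B : Ob C) (f : Hom C A B).

Lemma cone_whisker_exchange P (u : Hom C P A) (v : Hom C P B) (lam : Cell C P B)
    X (ga : Cell C X P) :
  src2 lam = v -> tgt2 lam = comp1 f u ->
  vcomp (whiskL f (whiskL u ga)) (whiskR lam (src2 ga)) =
  vcomp (whiskR lam (tgt2 ga)) (whiskL v ga).
Proof. intros <- Tl. rewrite whiskL_comp1, <- Tl. apply whisker_exchange. Qed.

Definition arrow_pseudolimit_2d P (u : Hom C P A) (v : Hom C P B) (lam : Cell C P B) :=
  forall (X : Ob C) (h k : Hom C X P) (al : Cell C X A) (be : Cell C X B),
    src2 al = comp1 u h -> tgt2 al = comp1 u k ->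
    src2 be = comp1 v h -> tgt2 be = comp1 v k ->
    vcomp (whiskL f al) (whiskR lam h) = vcomp (whiskR lam k) be ->
    exists ga : Cell C X P,
      (src2 ga = h /\ tgt2 ga = k /\ whiskL u ga = al /\ whiskL v ga = be) /\
      forall ga' : Cell C X P,
        src2 ga' = h -> tgt2 ga' = k -> whiskL u ga' = al ->
        whiskL v ga' = be -> ga' = ga.

(* Since [lam] is invertible, the [v]-component of a 2-cell is determined by
   its [u]-component; so only [u] has to be locally fully faithful. *)
Lemma arrow_pseudolimit_2d_of_equivalence P (u : Hom C P A) (v : Hom C P B)
    (lam : Cell C P B) :
  equivalence u -> src2 lam = v -> tgt2 lam = comp1 f u -> invertible lam ->
  arrow_pseudolimit_2d u v lam.
Proof.
  intros Hu Sl Tl Il X h k al be Sa Ta Sb Tb Hcomm.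
  destruct (equivalence_full Hu Sa Ta) as (ga & Sg & Tg & Ug & _).
  exists ga. split; [split; [exact Sg | split; [exact Tg | split; [exact Ug |]]] |].
  - apply (vcomp_cancel_l (a := whiskR lam k)); [invertibility | boundary | boundary |].
    rewrite <- Hcomm, <- Ug, <- Sg, <- Tg. symmetry. apply cone_whisker_exchange; auto.
  - intros ga' S' T' U' _. apply (equivalence_faithful Hu); congruence.
Qed.

Section Pseudolimit.
Variables (P : Ob C) (u : Hom C P A) (v : Hom C P B) (lam : Cell C P B).
Hypothesis Hpl : is_arrow_pseudolimit f u v lam.

Lemma arrow_pseudolimit_cell_unique X (ga1 ga2 : Cell C X P) :
  src2 ga1 = src2 ga2 -> tgt2 ga1 = tgt2 ga2 ->
  whiskL u ga1 = whiskL u ga2 -> whiskL v ga1 = whiskL v ga2 -> ga1 = ga2.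
Proof.
  destruct Hpl as ((Sl & Tl & Il) & _ & H2). intros S T Eu Ev.
  destruct (H2 X (src2 ga1) (tgt2 ga1) (whiskL u ga1) (whiskL v ga1))
    as (ga & _ & Uniq); try boundary.
  - apply cone_whisker_exchange; auto.
  - rewrite (Uniq ga1), (Uniq ga2); auto.
Qed.

Lemma arrow_pseudolimit_reflect_invertible X (ga : Cell C X P) :
  invertible (whiskL u ga) -> invertible (whiskL v ga) -> invertible ga.
Proof.
  pose proof Hpl as ((Sl & Tl & Il) & _ & H2). intros Iu Iv.
  destruct (H2 X (tgt2 ga) (src2 ga) (inv (whiskL u ga)) (inv (whiskL v ga)))
    as (ga' & (S' & T' & U' & V') & _); try boundary.
  - rewrite <- inv_whiskL by auto. symmetry.
    apply vcomp_square_inv; try invertibility; try boundary.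
    apply cone_whisker_exchange; auto.
  - exists ga'. split; [boundary | split; [boundary | split]].
    all: apply arrow_pseudolimit_cell_unique; try boundary;
      rewrite whiskL_vcomp, ?U', ?V', ?vcomp_invl, ?vcomp_invr, whiskL_id2 by boundary;
      boundary.
Qed.

Lemma arrow_pseudolimit_equivalence : equivalence u.
Proof.
  pose proof Hpl as ((Sl & Tl & Il) & H1 & H2).
  destruct (H1 A (id1 A) f (id2 f)) as (s & (Us & Vs & Ls) & _);
    [boundary | boundary | apply invertible_id2 |].
  destruct (H2 P (id1 P) (comp1 s u) (id2 u) lam) as (eta & (Se & Te & Ue & Ve) & _);
    try boundary.
  { rewrite whiskL_id2, whiskR_id1, vcomp_idl by boundary.
    rewrite <- whiskR_comp1, Ls, whiskR_id2, vcomp_idl by boundary. reflexivity. }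
  exists s, eta, (id2 (id1 A)).
  repeat split; try boundary; try apply invertible_id2.
  apply arrow_pseudolimit_reflect_invertible.
  - rewrite Ue. apply invertible_id2.
  - rewrite Ve. exact Il.
Qed.

Lemma arrow_pseudolimit_iso X (psi : Hom C X P) (phi : Hom C P X) :
  comp1 psi phi = id1 P -> comp1 phi psi = id1 X ->
  is_arrow_pseudolimit f (comp1 u psi) (comp1 v psi) (whiskR lam psi).
Proof.
  intros I1 I2. pose proof Hpl as ((Sl & Tl & Il) & H1 & H2).
  split; [| split].
  - split; [boundary | split; [boundary | invertibility]].
  - intros Y p q th Sth Tth Ith.
    destruct (H1 Y p q th) as (k & (Uk & Vk & Lk) & Uniq); auto.
    exists (comp1 phi k). split; [split; [boundary | split; [boundary |]] |].
    + rewrite whiskR_comp1. replace (comp1 psi (comp1 phi k)) with k by boundary.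
      exact Lk.
    + intros h' Uh Vh Lh. rewrite whiskR_comp1 in Lh.
      assert (Hk : comp1 psi h' = k) by (apply Uniq; boundary || exact Lh).
      subst k. boundary.
  - intros Y h k al be Sa Ta Sb Tb Hcomm. rewrite !whiskR_comp1 in Hcomm.
    destruct (H2 Y (comp1 psi h) (comp1 psi k) al be)
      as (ga & (Sg & Tg & Ug & Vg) & Uniq); try boundary; auto.
    exists (whiskL phi ga). split; [split; [boundary | split; [boundary | split]] |].
    + rewrite whiskL_comp1. replace (comp1 (comp1 u psi) phi) with u by boundary.
      exact Ug.
    + rewrite whiskL_comp1. replace (comp1 (comp1 v psi) phi) with v by boundary.
      exact Vg.
    + intros ga' S' T' U' V'.
      assert (Hg : whiskL psi ga' = ga)
        by (apply Uniq; try boundary; rewrite whiskL_comp1; auto).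
      rewrite <- Hg, whiskL_comp1. replace (comp1 phi psi) with (id1 X) by boundary.
      rewrite whiskL_id1. reflexivity.
Qed.

Lemma arrow_pseudolimit_unique_iso X (u' : Hom C X A) (v' : Hom C X B) (lam' : Cell C X B) :
  is_arrow_pseudolimit f u' v' lam' ->
  exists (psi : Hom C X P) (phi : Hom C P X),
    comp1 psi phi = id1 P /\ comp1 phi psi = id1 X /\
    comp1 u psi = u' /\ comp1 v psi = v' /\ whiskR lam psi = lam'.
Proof.
  intros Hpl'.
  pose proof Hpl as ((Sl & Tl & Il) & H1 & _).
  pose proof Hpl' as ((Sl' & Tl' & Il') & H1' & _).
  destruct (H1' P u v lam) as (phi & (U1 & V1 & L1) & _); auto.
  destruct (H1 X u' v' lam') as (psi & (U2 & V2 & L2) & _); auto.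
  exists psi, phi. split; [| split; [| auto]].
  - destruct (H1 P u v lam) as (h & _ & Uniq); auto.
    rewrite (Uniq (comp1 psi phi)), (Uniq (id1 P)); try boundary.
    + apply whiskR_id1.
    + rewrite <- whiskR_comp1, L2, L1. reflexivity.
  - destruct (H1' X u' v' lam') as (h & _ & Uniq); auto.
    rewrite (Uniq (comp1 phi psi)), (Uniq (id1 X)); try boundary.
    + apply whiskR_id1.
    + rewrite <- whiskR_comp1, L1, L2. reflexivity.
Qed.

(* A lift of the generic isomorphism [inv lam : f u => v] already lifts every
   isomorphism [f g => h], by pulling it back along the factorisation. *)
Lemma rep_isofibration_of_generic_lift (r : Hom C P A) (al : Cell C P A) :
  src2 al = u -> tgt2 al = r -> invertible al -> whiskL f al = inv lam ->
  rep_isofibration f.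
Proof.
  intros Sa Ta Ia Fa X g h th Sth Tth Ith.
  pose proof Hpl as ((Sl & Tl & Il) & H1 & _).
  destruct (H1 X g h (inv th)) as (k & (Uk & Vk & Lk) & _); try boundary; try invertibility.
  exists (comp1 r k), (whiskR al k).
  split; [boundary | split; [boundary | split; [invertibility |]]].
  rewrite <- whiskR_whiskL, Fa, <- inv_whiskR, Lk by auto. apply invK; auto.
Qed.

End Pseudolimit.
End ArrowPseudolimits.

Section DiscreteIsofibration.
Context {L K : TwoCat} (U : TwoFunctor L K).
Hypothesis Hdi : hom_discrete_isofibration U.

Lemma lift_unique A B (a b : Cell L A B) :
  invertible a -> invertible b -> tgt2 a = tgt2 b -> F2 U a = F2 U b -> a = b.
Proof.
  intros Ia Ib T F.
  destruct (Hdi (F2_tgt U b) (F2_invertible U Ib)) as (c & _ & Uniq).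
  rewrite (Uniq a), (Uniq b); auto.
Qed.

Definition lift_cell A B (g : Hom L A B) (th : Cell K (F0 U A) (F0 U B)) : Cell L A B :=
  epsilon (inhabits (id2 g)) (fun al => tgt2 al = g /\ invertible al /\ F2 U al = th).

Lemma lift_cell_spec A B (g : Hom L A B) (th : Cell K (F0 U A) (F0 U B)) :
  tgt2 th = F1 U g -> invertible th ->
  tgt2 (lift_cell g th) = g /\ invertible (lift_cell g th) /\ F2 U (lift_cell g th) = th.
Proof.
  intros Tth Ith. unfold lift_cell. apply epsilon_spec.
  destruct (Hdi Tth Ith) as (al & Hal & _). exists al; exact Hal.
Qed.

(* The 2-cell [inv eta h . eta h' : h' => h] lies over an identity, so it is one. *)
Lemma F1_inj_along_equivalence A P X (e : Hom L P A) (h h' : Hom L X P) :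
  equivalence e -> comp1 e h = comp1 e h' -> F1 U h = F1 U h' -> h = h'.
Proof.
  intros (g & eta & eps & Se & Te & Ie & _) Ee EU.
  set (c := vcomp (whiskR (inv eta) h) (whiskR eta h')).
  assert (Hc : c = id2 h).
  { apply lift_unique; unfold c; [invertibility | apply invertible_id2 | boundary |].
    rewrite F2_vcomp, !F2_whiskR, EU, <- whiskR_vcomp by boundary.
    rewrite <- F2_vcomp, vcomp_invl, Se, F2_id, F1_id, whiskR_id2, comp1_id_l, F2_id
      by (auto || boundary).
    congruence. }
  transitivity (src2 c).
  - rewrite Hc. symmetry. apply src_id2.
  - unfold c. boundary.
Qed.

(* Choose [sg : k => U (g p)] over [inv eps p] using that [U e] is locally
   fully faithful, and lift it along the discrete isofibration. *)
Lemma lift_1cell_along_equivalence A P X (e : Hom L P A) (p : Hom L X A)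
    (k : Hom K (F0 U X) (F0 U P)) :
  equivalence e -> comp1 (F1 U e) k = F1 U p ->
  exists h, F1 U h = k /\ comp1 e h = p.
Proof.
  intros He Ek. pose proof He as (g & eta & eps & Se & Te & Ie & Sp & Tp & Ip).
  set (al := whiskR (inv eps) p).
  destruct (equivalence_full (F1_equivalence U He) (x := k) (y := F1 U (comp1 g p))
    (al := F2 U al)) as (sg & Ss & Ts & Es & Is); [unfold al; boundary .. |].
  destruct (lift_cell_spec (g := comp1 g p) (th := sg)) as (Tb & Ib & Fb);
    [exact Ts | apply Is, F2_invertible; unfold al; invertibility |].
  set (sb := lift_cell (comp1 g p) sg) in *.
  assert (Hsb : whiskL e sb = al).
  { apply lift_unique; unfold al; [invertibility | invertibility | boundary |].
    rewrite F2_whiskL, Fb. exact Es. }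
  exists (src2 sb). split.
  - rewrite <- F2_src, Fb. exact Ss.
  - rewrite <- src_whiskL, Hsb. unfold al. boundary.
Qed.

Lemma arrow_pseudolimit_reflect A B (f : Hom L A B) P (u : Hom L P A) (v : Hom L P B)
    (lam : Cell L P B) :
  equivalence u -> src2 lam = v -> tgt2 lam = comp1 f u -> invertible lam ->
  is_arrow_pseudolimit (F1 U f) (F1 U u) (F1 U v) (F2 U lam) ->
  is_arrow_pseudolimit f u v lam.
Proof.
  intros Hu Sl Tl Il (_ & H1 & _).
  split; [auto | split; [| exact (arrow_pseudolimit_2d_of_equivalence Hu Sl Tl Il)]].
  intros X p q th Sth Tth Ith.
  destruct (H1 (F0 U X) (F1 U p) (F1 U q) (F2 U th)) as (k & (Uk & Vk & Lk) & Uniq);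
    [boundary | boundary | apply F2_invertible; auto |].
  destruct (lift_1cell_along_equivalence Hu Uk) as (h & Fh & Eh).
  assert (Lh : whiskR lam h = th).
  { apply lift_unique; [invertibility | auto | boundary |].
    rewrite F2_whiskR, Fh. exact Lk. }
  exists h. split; [split; [exact Eh | split; [| exact Lh]] |].
  - rewrite <- Sl, <- src_whiskR, Lh. exact Sth.
  - intros h' Eh' Vh' Lh'. apply (F1_inj_along_equivalence Hu); [congruence |].
    rewrite Fh. apply Uniq.
    + rewrite <- F1_comp, Eh'. reflexivity.
    + rewrite <- F1_comp, Vh'. reflexivity.
    + rewrite <- F2_whiskR, Lh'. reflexivity.
Qed.

Definition lifted_cleavage_cell A B
    (cl : forall X : Ob K, Hom K X (F0 U A) -> Cell K X (F0 U B) ->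
          Hom K X (F0 U A) * Cell K X (F0 U A))
    (X : Ob L) (g : Hom L X A) (al : Cell L X B) : Cell L X A :=
  lift_cell g (inv (snd (cl (F0 U X) (F1 U g) (F2 U al)))).
Arguments lifted_cleavage_cell {A B} cl X g al.

(* The chosen lift runs backwards, [h' => g], since the discrete isofibration
   lifts isomorphisms with a prescribed codomain. *)
Definition lifted_cleavage A B
    (cl : forall X : Ob K, Hom K X (F0 U A) -> Cell K X (F0 U B) ->
          Hom K X (F0 U A) * Cell K X (F0 U A))
    (X : Ob L) (g : Hom L X A) (al : Cell L X B) : Hom L X A * Cell L X A :=
  (src2 (lifted_cleavage_cell cl X g al), inv (lifted_cleavage_cell cl X g al)).
Arguments lifted_cleavage {A B} cl X g al.

Lemma lifted_cleavage_normal A B (f : Hom L A B) cl :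
  is_normal_cleavage (F1 U f) cl -> is_normal_cleavage f (lifted_cleavage cl).
Proof.
  intros ((Hlift & Hnat) & Hnorm).
  assert (Spec : forall X g al, src2 al = comp1 f g -> invertible al ->
    let be := snd (cl (F0 U X) (F1 U g) (F2 U al)) in
    invertible be /\ whiskL (F1 U f) be = F2 U al /\
    tgt2 (lifted_cleavage_cell cl X g al) = g /\
    invertible (lifted_cleavage_cell cl X g al) /\
    F2 U (lifted_cleavage_cell cl X g al) = inv be).
  { intros X g al Sal Ial; cbv zeta.
    destruct (Hlift (F0 U X) (F1 U g) (F2 U al)) as (Sbe & _ & Ibe & Fbe);
      [boundary | apply F2_invertible; auto |].
    destruct (lift_cell_spec (g := g) (th := inv (snd (cl (F0 U X) (F1 U g) (F2 U al)))))
      as (Tb & Ib & Fb);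
      [boundary | invertibility |].
    repeat split; auto. }
  unfold lifted_cleavage. split; [split |]; cbn [fst snd].
  - intros X g al Sal Ial.
    destruct (Spec X g al Sal Ial) as (Ibe & Fbe & Tb & Ib & Fb).
    split; [boundary | split; [boundary | split; [invertibility |]]].
    assert (E : whiskL f (lifted_cleavage_cell cl X g al) = inv al).
    { apply lift_unique; [invertibility | invertibility | boundary |].
      rewrite F2_whiskL, Fb, F2_inv, <- inv_whiskL, Fbe by auto. reflexivity. }
    rewrite <- inv_whiskL, E by auto. apply invK; auto.
  - intros Y X k g al Sal Ial.
    destruct (Spec X g al Sal Ial) as (Ibe & _ & Tb & Ib & Fb).
    destruct (Spec Y (comp1 g k) (whiskR al k)) as (_ & _ & Tb' & Ib' & Fb');
      [boundary | invertibility |].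
    assert (E : lifted_cleavage_cell cl Y (comp1 g k) (whiskR al k) =
                whiskR (lifted_cleavage_cell cl X g al) k).
    { apply lift_unique; [auto | invertibility | boundary |].
      rewrite Fb', !F2_whiskR, Fb, F1_comp, Hnat by (boundary || apply F2_invertible; auto).
      apply inv_whiskR; auto. }
    rewrite E. f_equal; [boundary | apply inv_whiskR; auto].
  - intros X g.
    destruct (Spec X g (id2 (comp1 f g))) as (_ & _ & Tb & Ib & Fb);
      [boundary | apply invertible_id2 |].
    assert (E : lifted_cleavage_cell cl X g (id2 (comp1 f g)) = id2 g).
    { apply lift_unique; [auto | apply invertible_id2 | boundary |].
      rewrite Fb, !F2_id, F1_comp, Hnorm, inv_id2. reflexivity. }
    rewrite E. apply inv_id2.
Qed.

Lemma normal_isofibration_reflect A B (f : Hom L A B) :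
  rep_isofibration f -> normal_isofibration (F1 U f) -> normal_isofibration f.
Proof.
  intros Hf (_ & cl & Hcl). split; [exact Hf |].
  exists (lifted_cleavage cl). exact (lifted_cleavage_normal Hcl).
Qed.

End DiscreteIsofibration.

Section Lifting.
Context {L K : TwoCat} (U : TwoFunctor L K).
Hypotheses (HK : has_arrow_pseudolimits K) (Hel : equivalence_lifting U)
  (Hdi : hom_discrete_isofibration U).

Lemma lifted_arrow_pseudolimit A B (f : Hom L A B) :
  exists P (u : Hom L P A) (v : Hom L P B) (lam : Cell L P B),
    is_arrow_pseudolimit f u v lam /\
    is_arrow_pseudolimit (F1 U f) (F1 U u) (F1 U v) (F2 U lam).
Proof.
  destruct (HK (F1 U f)) as (P & u & v & lam & Hpl).
  destruct (Hel (arrow_pseudolimit_equivalence Hpl)) as (Pb & ub & Hub & Ex).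
  assert (EP := f_equal (@projT1 _ _) Ex). simpl in EP. subst P.
  apply inj_pair2 in Ex. subst u.
  pose proof Hpl as ((Sl & Tl & Il) & _).
  assert (Tl' : tgt2 lam = F1 U (comp1 f ub)) by boundary.
  destruct (Hdi Tl' Il) as (lamb & (Tb & Ib & Fb) & _).
  assert (Fv : F1 U (src2 lamb) = v) by (rewrite <- F2_src, Fb; exact Sl).
  exists Pb, ub, (src2 lamb), lamb.
  assert (HplK : is_arrow_pseudolimit (F1 U f) (F1 U ub) (F1 U (src2 lamb)) (F2 U lamb))
    by (rewrite Fb, Fv; exact Hpl).
  split; [apply (arrow_pseudolimit_reflect Hdi) |]; auto.
Qed.

Lemma has_arrow_pseudolimits_lift : has_arrow_pseudolimits L.
Proof.
  intros A B f. destruct (lifted_arrow_pseudolimit f) as (P & u & v & lam & Hpl & _).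
  exists P, u, v, lam. exact Hpl.
Qed.

Lemma preserves_arrow_pseudolimits_lift : preserves_arrow_pseudolimits U.
Proof.
  intros A B f X u v lam Hpl.
  destruct (lifted_arrow_pseudolimit f) as (P & ub & vb & lamb & HplL & HplK).
  destruct (arrow_pseudolimit_unique_iso HplL Hpl) as (psi & phi & I1 & I2 & <- & <- & <-).
  rewrite !F1_comp, F2_whiskR.
  apply (arrow_pseudolimit_iso HplK (phi := F1 U phi)); rewrite <- F1_comp, ?I1, ?I2, F1_id;
    reflexivity.
Qed.

End Lifting.

Lemma F1_rep_isofibration {L K : TwoCat} (U : TwoFunctor L K) :
  has_arrow_pseudolimits L -> preserves_arrow_pseudolimits U ->
  forall A B (f : Hom L A B), rep_isofibration f -> rep_isofibration (F1 U f).
Proof.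
  intros HL HU A B f Hf.
  destruct (HL A B f) as (P & u & v & lam & Hpl).
  pose proof Hpl as ((Sl & Tl & Il) & _).
  destruct (Hf P u v (inv lam)) as (r & al & Sa & Ta & Ia & Fa);
    [boundary | boundary | invertibility |].
  apply (rep_isofibration_of_generic_lift (HU _ _ _ _ _ _ _ Hpl) (r := F1 U r) (al := F2 U al));
    [boundary | boundary | apply F2_invertible; auto |].
  rewrite <- F2_whiskL, Fa, F2_inv; auto.
Qed.

Theorem proposition3p20 (L K : TwoCat) (U : TwoFunctor L K) :
  has_arrow_pseudolimits K ->
  equivalence_lifting U ->
  hom_discrete_isofibration U ->
  has_arrow_pseudolimits L /\ preserves_arrow_pseudolimits U /\
  (normal_isofibration_property K -> normal_isofibration_property L).
Proof.
  intros HK Hel Hdi.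
  pose proof (has_arrow_pseudolimits_lift HK Hel Hdi) as HL.
  pose proof (preserves_arrow_pseudolimits_lift HK Hel Hdi) as HU.
  split; [exact HL | split; [exact HU |]].
  intros HnK A B f Hf.
  apply (normal_isofibration_reflect Hdi Hf), HnK, (F1_rep_isofibration HL HU Hf).
Qed.
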